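(* Let $\ell\ge1$, let $G$ be an $\ell$-connected chordal graph, and let $T$ be a clique of $G$ with $T\ne V(G)$. If $(G,T)$ can be obtained from $(G-v,T\setminus\{v\})$ using an introduce operation, then $|T|\ge \ell+1$ and $G-v$ is $\ell$-connected. If $(G,T)$ can be obtained from $(G_1,T)$ and $(G_2,T)$ using a join operation, then $|T|\ge\ell$ and both $G_1$ and $G_2$ are $\ell$-connected.
   Context: A chordal graph has no induced cycle of length $>3$. For $\ell\ge1$, a connected graph $G$ is $\ell$-connected if $|V(G)|\ge\ell+1$ and every vertex cut (set whose removal disconnects $G$) has at least $\ell$ vertices. A terminal graph $(G,T)$ is a graph with $T\subseteq V(G)$. $(G,T)$ is obtained from $(G-v,T\setminus\{v\})$ by introducing $v$ if $T\ne V(G)$, $v\in T$ and $N(v)\subseteq T$. $(G,T)$ is the join of $(G_1,T)$ and $(G_2,T)$ if $G_1,G_2$ are induced subgraphs of $G$, $V(G_1)\cap V(G_2)=T$, $V(G_1)\cup V(G_2)=V(G)$, $V(G_1)\ne T\ne V(G_2)$, and every edge of $G$ lies in $G_1$ or in $G_2$. *)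

From mathcomp Require Import all_boot.
Set Implicit Arguments. Unset Strict Implicit. Unset Printing Implicit Defensive.

(* A simple graph is given by a finite ambient type A, a symmetric irreflexive
   adjacency relation e : rel A, and a vertex set V : {set A}; the graph is the
   induced graph (V, e restricted to V).  Induced subgraphs are given by
   vertex subsets. *)

Definition simple_rel (A : finType) (e : rel A) : Prop :=
  symmetric e /\ irreflexive e.

Definition restr (A : finType) (e : rel A) (S : {set A}) : rel A :=
  [rel x y | [&& x \in S, y \in S & e x y]].

(* the graph (S, e) is connected (the empty graph counts as connected here;
   nonemptiness is required separately where needed) *)
Definition connectedG (A : finType) (e : rel A) (S : {set A}) : Prop :=
  forall x y, x \in S -> y \in S -> connect (restr e S) x y.

Definition l_connected (A : finType) (e : rel A) (l : nat) (V : {set A}) : Prop :=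
  [/\ connectedG e V, l.+1 <= #|V| &
      forall X : {set A}, X \subset V -> ~ connectedG e (V :\: X) -> l <= #|X| ].

Definition induced_long_cycle (A : finType) (e : rel A) (V : {set A}) (s : seq A) : Prop :=
  [/\ uniq s, 4 <= size s, all (mem V) s &
      forall (x0 : A) i j, i < size s -> j < size s ->
        e (nth x0 s i) (nth x0 s j) =
        ((i.+1 %% size s == j) || (j.+1 %% size s == i))].

Definition chordal (A : finType) (e : rel A) (V : {set A}) : Prop :=
  forall s : seq A, ~ induced_long_cycle e V s.

Definition is_clique (A : finType) (e : rel A) (V T : {set A}) : Prop :=
  T \subset V /\ forall x y, x \in T -> y \in T -> x != y -> e x y.

Definition nbhd (A : finType) (e : rel A) (V : {set A}) (v : A) : {set A} :=
  [set u in V | e v u].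

(* (V, T) is obtained from (V :\ v, T :\ v) by introducing v *)
Definition introduces (A : finType) (e : rel A) (V T : {set A}) (v : A) : Prop :=
  [/\ T != V, v \in T & nbhd e V v \subset T].

(* (V, T) is the join of (V1, T) and (V2, T) (G1 = G[V1], G2 = G[V2]) *)
Definition is_join (A : finType) (e : rel A) (V T V1 V2 : {set A}) : Prop :=
  [/\ V1 \subset V, V2 \subset V, V1 :&: V2 = T, V1 :|: V2 = V &
      [/\ V1 != T, V2 != T &
      forall x y, x \in V -> y \in V -> e x y ->
        (x \in V1) && (y \in V1) || (x \in V2) && (y \in V2)]].

From mathcomp Require Import all_boot.
Set Implicit Arguments. Unset Strict Implicit. Unset Printing Implicit Defensive.

(* Both operations produce a clique separator: after an introduce, N(v) ⊊ T
   separates v from a vertex outside T; after a join, T separates V1 \ T from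
   V2 \ T.  This gives the bounds on |T|.  For connectivity, a path of G - X
   that leaves the smaller graph must leave and re-enter it through the clique
   T \ X, so it can be shortcut by a single edge of T; hence every vertex cut of
   the smaller graph is a vertex cut of G. *)

Section CliqueShortcut.

Variables (A : finType) (e : rel A) (S W K : {set A}).
Hypotheses (e_sym : symmetric e) (sub_WS : W \subset S) (sub_KW : K \subset W).
Hypothesis K_clique : forall a b, a \in K -> b \in K -> a != b -> e a b.
Hypothesis K_boundary :
  forall x y, x \in W -> y \in S -> y \notin W -> e x y -> x \in K.

(* Invariant: either the path is still inside W at x0 = x, or it has left W
   and x0 is the vertex of K through which it left. *)
Lemma connect_shortcut_path p x x0 :
  path (restr e S) x p -> last x p \in W -> x0 \in W ->
  (x \in W) && (x0 == x) || (x \notin W) && (x0 \in K) ->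
  connect (restr e W) x0 (last x p).
Proof.
elim: p x x0 => [|y p IHp] x x0 /=.
  by move=> _ xW _; rewrite xW /= orbF => /eqP ->.
move=> /andP[/and3P[xS yS exy] yp] lastW x0W.
have from_y : y \in W -> connect (restr e W) y (last y p).
  by move=> yW; apply: IHp => //; rewrite yW eqxx.
case xW: (x \in W); case yW: (y \in W); rewrite /= ?orbF.
- by move=> /eqP->; apply: connect_trans (from_y yW); apply: connect1; apply/and3P.
- by move=> /eqP->; apply: IHp => //; rewrite yW /= (K_boundary xW yS) ?yW.
- move=> x0K; have yK : y \in K by apply: (K_boundary yW xS); rewrite ?xW // e_sym.
  apply: connect_trans (from_y yW).
  have [->|x0y] := eqVneq x0 y; first exact: connect0.
  by apply: connect1; apply/and3P; split => //; apply: K_clique.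
- by move=> x0K; apply: IHp => //; rewrite yW x0K.
Qed.

Lemma connectedG_shortcut : connectedG e S -> connectedG e W.
Proof.
move=> connS x y xW yW.
have /connectP[p xp y_last] := connS x y (subsetP sub_WS _ xW) (subsetP sub_WS _ yW).
rewrite y_last; apply: connect_shortcut_path => //; first by rewrite -y_last.
by rewrite xW eqxx.
Qed.

End CliqueShortcut.

Lemma closed_separation_not_connectedG (A : finType) (e : rel A) (S P : {set A}) a b :
  (forall x y, restr e S x y -> (x \in P) = (y \in P)) ->
  a \in S -> b \in S -> a \in P -> b \notin P -> ~ connectedG e S.
Proof.
move=> P_closed aS bS aP bP connS.
have := closed_connect P_closed (connS a b aS bS).
by rewrite aP (negbTE bP).
Qed.

Lemma l_connected_subset (A : finType) (e : rel A) (l : nat) (V W : {set A}) :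
  l_connected e l V -> W \subset V -> l.+1 <= #|W| ->
  (forall X : {set A}, X \subset W -> connectedG e (V :\: X) -> connectedG e (W :\: X)) ->
  l_connected e l W.
Proof.
move=> [connV _ cutV] sub_WV szW cuts_transfer; split => //.
- by move: (cuts_transfer set0 (sub0set W)); rewrite !setD0; apply.
- move=> X sub_XW not_connWX; apply: cutV; first exact: subset_trans sub_WV.
  by move=> connVX; apply/not_connWX/cuts_transfer.
Qed.

Section Introduce.

Variables (A : finType) (e : rel A) (V T : {set A}) (v : A).
Hypotheses (e_sym : symmetric e) (e_irr : irreflexive e).
Hypotheses (T_clique : is_clique e V T) (v_intro : introduces e V T v).

Lemma nbhd_not_connectedG w :
  v \in V -> w \in V -> w != v -> w \notin nbhd e V v ->
  ~ connectedG e (V :\: nbhd e V v).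
Proof.
move=> vV wV wv wN.
apply: (closed_separation_not_connectedG (P := [set v]) (a := v) (b := w)).
- move=> x y /and3P[]; rewrite !inE => /andP[xN xV] /andP[yN yV] exy.
  have [xv|_] := eqVneq x v; first by move: yN; rewrite -xv yV exy.
  have [yv|//] := eqVneq y v.
  by move: xN; rewrite -yv xV e_sym exy.
- by rewrite !inE vV e_irr.
- by rewrite inE wN wV.
- by rewrite inE.
- by rewrite inE.
Qed.

Let T_sub_V : T \subset V. Proof. by case: T_clique. Qed.
Let T_proper_V : T \proper V.
Proof. by case: v_intro => TV _ _; rewrite properEneq TV T_sub_V. Qed.
Let v_in_T : v \in T. Proof. by case: v_intro. Qed.
Let v_in_V : v \in V. Proof. exact: subsetP T_sub_V v v_in_T. Qed.
Let nbhd_sub_T : nbhd e V v \subset T. Proof. by case: v_intro. Qed.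

Lemma introduce_card_clique l : l_connected e l V -> l.+1 <= #|T|.
Proof.
move=> [_ _ cutV]; have [_ [w wV wT]] := properP T_proper_V.
have nbhd_proper_T : nbhd e V v \proper T.
  by apply/properP; split=> //; exists v; rewrite // inE e_irr andbF.
apply: leq_ltn_trans (proper_card nbhd_proper_T); apply: cutV.
  by apply/subsetP => u; rewrite inE => /andP[].
apply: (nbhd_not_connectedG v_in_V wV); first by apply: contraNneq wT => ->.
by apply: contra wT; apply: subsetP.
Qed.

Lemma introduce_l_connected l : l_connected e l V -> l_connected e l (V :\ v).
Proof.
move=> lconnV; have lT := introduce_card_clique lconnV.
apply: l_connected_subset lconnV (subsetDl _ _) _ _.
  have := proper_card T_proper_V; rewrite (cardsD1 v V) v_in_V add1n ltnS.
  exact: leq_trans lT.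
move=> X _ connVX; apply: (connectedG_shortcut (K := (T :\ v) :\: X)) connVX => //.
- by apply/subsetP => x; rewrite !inE => /and3P[-> _ ->].
- by move=> a b; rewrite !inE => /and3P[_ _ aT] /and3P[_ _ bT]; case: T_clique => _; apply.
- move=> x y; rewrite !inE => /and3P[xX xv xV] /andP[yX yV].
  rewrite yX yV /= andbT negbK => /eqP -> exv.
  by rewrite xX xv; apply: (subsetP nbhd_sub_T); rewrite inE xV e_sym.
Qed.

End Introduce.

Lemma is_join_sym (A : finType) (e : rel A) (V T V1 V2 : {set A}) :
  is_join e V T V1 V2 -> is_join e V T V2 V1.
Proof.
move=> [sub1 sub2 capT cupV [n1 n2 edges]].
split; rewrite 1?setIC 1?setUC //; split=> // x y xV yV exy.
by rewrite orbC; apply: edges.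
Qed.

Section Join.

Variables (A : finType) (e : rel A) (V T V1 V2 : {set A}).
Hypotheses (e_sym : symmetric e) (T_clique : is_clique e V T).
Hypothesis join : is_join e V T V1 V2.

Lemma join_separator_card l : l_connected e l V -> l <= #|T|.
Proof.
move=> [_ _ cutV]; have [sub1 sub2 capT _ [n1 n2 edges]] := join.
have T_sub_V1 : T \subset V1 by rewrite -capT subsetIl.
have T_sub_V2 : T \subset V2 by rewrite -capT subsetIr.
have /properP[_ [a aV1 aT]] : T \proper V1 by rewrite properEneq eq_sym n1.
have /properP[_ [b bV2 bT]] : T \proper V2 by rewrite properEneq eq_sym n2.
have notin_V1 z : z \in V2 -> z \notin T -> z \notin V1.
  by move=> zV2; apply: contra => zV1; rewrite -capT inE zV1.
apply: cutV; first by case: T_clique.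
apply: (closed_separation_not_connectedG (P := V1 :\: T) (a := a) (b := b)).
- move=> x y /and3P[]; rewrite !inE => /andP[xT xV] /andP[yT yV] exy.
  rewrite xT yT; case/orP: (edges x y xV yV exy) => /andP[x12 y12].
    by rewrite x12 y12.
  by rewrite (negbTE (notin_V1 x x12 xT)) (negbTE (notin_V1 y y12 yT)).
- by rewrite inE aT (subsetP sub1).
- by rewrite inE bT (subsetP sub2).
- by rewrite inE aT.
- by rewrite inE negb_and (notin_V1 b bV2 bT) orbT.
Qed.

Lemma join_l_connected_left l : l_connected e l V -> l_connected e l V1.
Proof.
move=> lconnV; have lT := join_separator_card lconnV.
have [sub1 _ capT _ [n1 _ edges]] := join.
have T_sub_V1 : T \subset V1 by rewrite -capT subsetIl.
apply: (l_connected_subset lconnV sub1).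
  by apply: leq_ltn_trans lT (proper_card _); rewrite properEneq eq_sym n1.
move=> X _ connVX; apply: (connectedG_shortcut (K := T :\: X)) connVX => //.
- by apply/subsetP => x; rewrite !inE => /andP[-> /(subsetP sub1) ->].
- by move=> a b; rewrite !inE => /andP[_ aT] /andP[_ bT]; case: T_clique => _; apply.
- move=> x y; rewrite !inE => /andP[xX xV1] /andP[yX yV].
  rewrite yX /= => yV1 exy; rewrite xX -capT inE xV1.
  by case/orP: (edges x y (subsetP sub1 _ xV1) yV exy) => /andP[] // _; rewrite (negbTE yV1).
Qed.

End Join.

Theorem proposition6 (A : finType) (e : rel A) (V T : {set A}) (l : nat) :
  simple_rel e -> 1 <= l -> l_connected e l V -> chordal e V ->
  is_clique e V T -> T != V ->
  (forall v : A, introduces e V T v ->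
     l.+1 <= #|T| /\ l_connected e l (V :\ v)) /\
  (forall V1 V2 : {set A}, is_join e V T V1 V2 ->
     [/\ l <= #|T|, l_connected e l V1 & l_connected e l V2]).
Proof.
move=> [e_sym e_irr] _ lconnV _ T_clique _; split.
- move=> v v_intro; split.
  + exact: introduce_card_clique e_irr T_clique v_intro l lconnV.
  + exact: introduce_l_connected e_sym e_irr T_clique v_intro l lconnV.
- move=> V1 V2 join; split.
  + exact: join_separator_card T_clique join l lconnV.
  + exact: join_l_connected_left e_sym T_clique join l lconnV.
  + exact: join_l_connected_left e_sym T_clique (is_join_sym join) l lconnV.
Qed.
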